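(* Let $q$ be a positive integer and $\lambda$ be a partition. Then \[c^{(q)}_\lambda=\left|\mathscr{W}^{(q)}_{r(\lambda)}\right|\cdot\frac{\prod_{i=0}^{q-1}r_i(\lambda)!}{\prod_{s\geq1}n_s(\lambda)!}\cdot\binom{\ell(\lambda)-1}{r_0(\lambda)}.\] In particular, $c^{(q)}_\lambda\neq0$ if and only if $\mathscr{W}^{(q)}_{r(\lambda)}\neq\emptyset$.
   Context: A composition of $n\in\mathbb{N}_0$ is a finite sequence $\delta=(\delta_1,\ldots,\delta_s)$ of positive integers with $\sum_i\delta_i=n$; write $\ell(\delta)=s$, $|\delta|=n$; the unique composition of $0$ is the empty composition. A partition is a composition with $\delta_1\geq\cdots\geq\delta_s$. Partial sums: $\delta^+_j=\sum_{i=1}^j\delta_i$. For a positive integer $d$, $n_d(\delta)=|\{i:\delta_i=d\}|$. For a positive integer $q$, a composition $\delta$ is called $q'$-cumulative if it is nonempty and $q\nmid\delta^+_j$ for all $1\leq j\leq\ell(\delta)$ (the empty composition is not regarded as $q'$-cumulative). For a partition $\lambda$, $\mathscr{C}(\lambda)$ is the set of compositions that are rearrangements of $\lambda$, and $c^{(q)}_\lambda$ is the number of $q'$-cumulative $\delta\in\mathscr{C}(\lambda)$. For $0\leq j\leq q-1$, $r_j(\delta)=\sum_{i\equiv j\,(\mathrm{mod}\ q)}n_i(\delta)$, and $r(\delta)=(r_1(\delta),\ldots,r_{q-1}(\delta))\in\mathbb{N}_0^{q-1}$. For $\mathbf{r}=(r_1,\ldots,r_{q-1})\in\mathbb{N}_0^{q-1}$,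 let $\mu$ be the partition $((q-1)^{r_{q-1}},\ldots,2^{r_2},1^{r_1})$ (having $r_i$ parts equal to $i$) and $\mathscr{W}^{(q)}_{\mathbf{r}}=\{\delta\in\mathscr{C}(\mu):\delta\text{ is }q'\text{-cumulative}\}$. The binomial coefficient $\binom{m}{k}$ is $0$ when $k>m\ge 0$. *)

From mathcomp Require Import all_boot all_order all_algebra.
Set Implicit Arguments. Unset Strict Implicit. Unset Printing Implicit Defensive.

Definition is_composition (d : seq nat) : bool := all (fun x => 0 < x) d.

Definition is_partition (l : seq nat) : bool :=
  is_composition l && sorted geq l.

Definition psum (d : seq nat) (j : nat) : nat := sumn (take j d).

Definition nmult (d : seq nat) (x : nat) : nat := count_mem x d.

Definition qcumulative (q : nat) (d : seq nat) : bool :=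
  (d != [::]) && all (fun j => ~~ (q %| psum d j)) (iota 1 (size d)).

(* C(lambda): the (distinct) rearrangements of lambda *)
Definition rearrangements (l : seq nat) : seq (seq nat) := permutations l.

Definition cq (q : nat) (l : seq nat) : nat :=
  count (qcumulative q) (rearrangements l).

(* r_j(delta) = sum over i = j (mod q) of n_i(delta), for 0 <= j <= q-1 *)
Definition rj (q : nat) (d : seq nat) (j : nat) : nat :=
  count (fun x => x %% q == j) d.

Definition rvec (q : nat) (d : seq nat) : seq nat :=
  [seq rj q d j | j <- iota 1 q.-1].

(* mu(r) = ((q-1)^{r_{q-1}}, ..., 1^{r_1}), with r_i = nth 0 r (i-1) *)
Definition mu_of (q : nat) (r : seq nat) : seq nat :=
  flatten [seq nseq (nth 0 r i.-1) i | i <- rev (iota 1 q.-1)].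

Definition Wq (q : nat) (r : seq nat) : seq (seq nat) :=
  filter (qcumulative q) (rearrangements (mu_of q r)).

(* For an offset a and a word s, let F_a(s) count the distinct rearrangements t
   of s such that q divides none of the shifted partial sums a + t^+_j, and let
   G_a(s) be the same count when equal letters are made distinguishable.  Then
   G_a(s) = F_a(s) prod_v n_v(s)!, and G satisfies the first-letter recursion
   G_a(s) = sum_(x in s) [q does not divide a + x] G_(a+x)(s - x).
   From the recursion, G depends only on a mod q and on the residues of the
   letters mod q.  Letters divisible by q never change a partial sum mod q, so
   if s has length n and z such letters, and s' is the word of the others,
   G_a(s) = G_a(s') n^(z) when q does not divide a, and G_a(s) = G_a(s') (n-1)^(z)
   when it does (the first letter must then avoid the multiples of q).
   Applied to a = 0 and the residues of l, for which s' is a rearrangement of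
   mu(r(l)) and z = r_0(l), this gives the identity
   c_l prod_s n_s(l)! = |W_r(l)| prod_(i < q) r_i(l)! 'C(|l| - 1, r_0(l))
   in the natural numbers, from which both claims of the proposition follow. *)
From mathcomp Require Import all_boot all_order all_algebra.
From mathcomp Require Import ring zify.
Import GRing.Theory Num.Theory.
Set Implicit Arguments. Unset Strict Implicit. Unset Printing Implicit Defensive.

Section OffsetArrangements.
Variable q : nat.

(* [offset_free a t]: every shifted partial sum a + t^+_j, 1 <= j <= |t|,
   avoids the multiples of q.  For a = 0 and t nonempty this is q'-cumulativity. *)
Definition offset_free (a : nat) (t : seq nat) : bool :=
  all (fun j => ~~ (q %| a + psum t j)) (iota 1 (size t)).

Lemma psum0 (t : seq nat) : psum t 0 = 0.
Proof. by rewrite /psum take0. Qed.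

Lemma psum_cons (x : nat) (t : seq nat) (j : nat) :
  psum (x :: t) j.+1 = x + psum t j.
Proof. by []. Qed.

Lemma offset_free_cons (a x : nat) (t : seq nat) :
  offset_free a (x :: t) = ~~ (q %| a + x) && offset_free (a + x) t.
Proof.
rewrite /offset_free /= psum_cons psum0 addn0; congr andb.
rewrite -(addn1 1) iotaDl all_map; apply: eq_all => j /=.
by rewrite add1n psum_cons addnA.
Qed.

Definition arrangements (a : nat) (s : seq nat) : nat :=
  count (offset_free a) (permutations s).

Lemma arrangements_rec (a : nat) (s : seq nat) : 0 < size s ->
  arrangements a s =
  \sum_(x <- undup s) (~~ (q %| a + x)) * arrangements (a + x) (rem x s).
Proof.
move=> s_gt0; rewrite /arrangements (permP (permutationsE s_gt0)).
rewrite /allpairs_dep count_flatten sumnE !big_map.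
apply: eq_bigr => x _; rewrite count_map.
under eq_count => t do rewrite /preim /= offset_free_cons.
case: (q %| a + x) => /=; last by rewrite mul1n.
by rewrite mul0n; exact: count_pred0.
Qed.

(* G_a(s): the same count for the letters of s made pairwise distinguishable
   (labelled), given by the first-letter recursion over s with multiplicity.
   The fuel n is the length of s. *)
Fixpoint labelled (n a : nat) (s : seq nat) : nat :=
  if n is n'.+1 then
    \sum_(x <- s) (~~ (q %| a + x)) * labelled n' (a + x) (rem x s)
  else 1.

Definition labellings (N : nat) (s : seq nat) : nat :=
  \prod_(0 <= v < N) (count_mem v s)`!.

Lemma labellings_rem (N x : nat) (s : seq nat) : x \in s -> x < N ->
  labellings N s = count_mem x s * labellings N (rem x s).
Proof.
move=> xs xN; have Es v : count_mem v s = (x == v) + count_mem v (rem x s).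
  by rewrite (permP (perm_to_rem xs)).
rewrite /labellings !big_mkord (bigD1 (Ordinal xN)) //= [in RHS](bigD1 (Ordinal xN)) //=.
rewrite mulnA Es eqxx add1n factS; congr (_ * _).
apply: eq_bigr => i ne_ix; rewrite Es.
suff /negbTE-> : x != i by [].
by apply: contra ne_ix => /eqP xi; apply/eqP/val_inj.
Qed.

Lemma arrangements_labelled (N n a : nat) (s : seq nat) :
  size s = n -> all (fun x => x < N) s ->
  arrangements a s * labellings N s = labelled n a s.
Proof.
elim: n a s => [|n IH] a s.
  by move/size0nil=> -> _; rewrite /labellings big1.
move=> sz s_lt; rewrite arrangements_rec ?sz // big_distrl /=.
rewrite -[in RHS]big_undup_iterop_count.
apply: eq_big_seq => x; rewrite mem_undup => xs.
rewrite Monoid.iteropE iter_addn_0.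
have xN : x < N by move/allP: s_lt; apply.
rewrite (labellings_rem xs xN) -IH; last 2 first.
- by rewrite size_rem // sz.
- by apply/allP => y /mem_rem; move/allP: s_lt; apply.
by rewrite [count_mem _ _ * _]mulnC !mulnA.
Qed.

Lemma labelled_offset_mod (n a a' : nat) (s : seq nat) :
  a = a' %[mod q] -> labelled n a s = labelled n a' s.
Proof.
elim: n a a' s => [|n IH] a a' s //= Ea.
apply: eq_bigr => x _.
have Eax : a + x = a' + x %[mod q] by rewrite -modnDml Ea modnDml.
by rewrite /dvdn Eax (IH _ _ _ Eax).
Qed.

Lemma perm_rem (x : nat) (s t : seq nat) :
  perm_eq s t -> perm_eq (rem x s) (rem x t).
Proof. by move=> Est; apply/permP => P; rewrite !count_rem (permP Est) (perm_mem Est). Qed.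

Lemma labelled_perm (n a : nat) (s t : seq nat) :
  perm_eq s t -> labelled n a s = labelled n a t.
Proof.
elim: n a s t => [|n IH] a s t Est //=.
rewrite (perm_big _ Est); apply: eq_bigr => x _.
by rewrite (IH _ _ _ (perm_rem x Est)).
Qed.

Lemma labelled_residues (n a : nat) (s : seq nat) :
  labelled n a (map (modn^~ q) s) = labelled n a s.
Proof.
elim: n a s => [|n IH] a s //=.
rewrite big_map; apply: eq_big_seq => x xs.
have Eax : a + x %% q = a + x %[mod q] by rewrite modnDmr.
have Erem : perm_eq (rem (x %% q) (map (modn^~ q) s)) (map (modn^~ q) (rem x s)).
  by have := perm_rem (x %% q) (perm_map (modn^~ q) (perm_to_rem xs)); rewrite /= eqxx.
by rewrite /dvdn Eax (labelled_perm _ _ Erem) IH (labelled_offset_mod _ _ Eax).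
Qed.

End OffsetArrangements.

Lemma filter_rem_out (T : eqType) (p : pred T) (x : T) (s : seq T) :
  ~~ p x -> filter p (rem x s) = filter p s.
Proof.
move=> px; elim: s => //= y s IH; case: eqP => [->|_] /=; first by rewrite (negbTE px).
by rewrite IH.
Qed.

Lemma filter_rem_in (T : eqType) (p : pred T) (x : T) (s : seq T) :
  p x -> filter p (rem x s) = rem x (filter p s).
Proof.
move=> px; elim: s => //= y s IH; case: eqP => [->|/eqP ne] /=; first by rewrite px /= eqxx.
by case: (p y) => //=; rewrite (negbTE ne) IH.
Qed.

Lemma ffact_pascal (n z : nat) : n.+1 ^_ z = z * n ^_ z.-1 + n ^_ z.
Proof.
case: z => [|k] //=; rewrite ffactSS ffactnSr.
case: (leqP k n) => [le_kn|lt_nk]; last by rewrite ffact_small // !muln0 mul0n.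
by rewrite [k.+1 * _]mulnC -mulnDr mulnC addSn subnKC.
Qed.

Section ZeroInsertion.
Variable q : nat.

Definition nonzero_part (s : seq nat) : seq nat := filter (fun x => ~~ (q %| x)) s.
Definition zero_count (s : seq nat) : nat := count (fun x => q %| x) s.

Lemma zero_count_nonzero_part (s : seq nat) :
  zero_count s + size (nonzero_part s) = size s.
Proof. by rewrite /zero_count /nonzero_part size_filter count_predC. Qed.

Definition lcount (a : nat) (s : seq nat) : nat := labelled q (size s) a s.

Lemma lcount_rec (a : nat) (s : seq nat) : 0 < size s ->
  lcount a s = \sum_(x <- s) (~~ (q %| a + x)) * lcount (a + x) (rem x s).
Proof.
rewrite /lcount; case: s => // y s _ /=.
apply: eq_big_seq => x xs; congr (_ * _).
by have := size_rem xs; rewrite /= => ->.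
Qed.

Lemma lcount_first_letter (a : nat) (t : seq nat) :
  \sum_(x <- t) (~~ (q %| a + x)) * lcount (a + x) (rem x t) = (t != [::]) * lcount a t.
Proof. by case: t => [|y t]; rewrite ?big_nil // (lcount_rec a (s := y :: t)) // mul1n. Qed.

(* Inserting z multiples of q into a word of length n - z, with an offset that is
   not a multiple of q, multiplies G by the number n^(z) of placements. *)
Definition zero_insertion (n : nat) : Prop :=
  forall (t : seq nat) (a : nat), size t = n -> ~~ (q %| a) ->
  lcount a t = lcount a (nonzero_part t) * n ^_ (zero_count t).

Lemma lcount_nonzero_first (n a : nat) (s : seq nat) :
  zero_insertion n -> size s = n.+1 ->
  \sum_(x <- s | ~~ (q %| x)) (~~ (q %| a + x)) * lcount (a + x) (rem x s)
   = n ^_ (zero_count s) * ((nonzero_part s != [::]) * lcount a (nonzero_part s)).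
Proof.
move=> ins_n sz; rewrite -lcount_first_letter big_distrr /= /nonzero_part big_filter.
rewrite big_seq_cond [RHS]big_seq_cond; apply: eq_bigr => x /andP[xs nx].
case ax: (q %| a + x); first by rewrite !mul0n muln0.
rewrite !mul1n ins_n ?size_rem ?sz ?ax // /nonzero_part filter_rem_in //.
by rewrite /zero_count count_rem xs /= (negbTE nx) subn0 mulnC.
Qed.

Lemma lcount_zero_insertion (n : nat) : zero_insertion n.
Proof.
elim: n => [|n IH] s a; first by move/size0nil=> ->.
move=> sz na; rewrite lcount_rec ?sz // (bigID (fun x => q %| x)) /=.
rewrite (lcount_nonzero_first a IH sz).
have zero_first : \sum_(x <- s | q %| x) (~~ (q %| a + x)) * lcount (a + x) (rem x s)
    = \sum_(x <- s | q %| x) lcount a (nonzero_part s) * n ^_ (zero_count s).-1.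
  rewrite big_seq_cond [RHS]big_seq_cond; apply: eq_bigr => x /andP[xs zx].
  have nax : ~~ (q %| a + x) by rewrite dvdn_addl.
  rewrite nax mul1n IH ?size_rem ?sz //.
  rewrite /nonzero_part filter_rem_out ?zx // /zero_count count_rem xs zx subn1.
  congr (_ * _); apply: labelled_offset_mod.
  by rewrite -modnDmr (eqP zx) addn0.
rewrite zero_first big_const_seq iter_addn_0 -/(zero_count s).
have [sp0|sp_ne] := eqVneq (nonzero_part s) [::].
  have -> : zero_count s = n.+1 by rewrite -sz -zero_count_nonzero_part sp0 addn0.
  by rewrite sp0 /= mul0n muln0 addn0 ffactSS mulnC mulnCA.
by rewrite mul1n ffact_pascal mulnDr [zero_count s * _]mulnC mulnA [in X in _ + X]mulnC.
Qed.

(* With an offset divisible by q the first letter cannot be a multiple of q,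
   so only n - 1 positions remain for the z inserted multiples of q. *)
Lemma lcount_zero_insertion_head (a : nat) (s : seq nat) : q %| a -> 0 < size s ->
  lcount a s = lcount a (nonzero_part s) * (size s).-1 ^_ (zero_count s).
Proof.
move=> qa; case sz: (size s) => [|n] // _.
rewrite lcount_rec ?sz // (bigID (fun x => q %| x)) /=.
rewrite (lcount_nonzero_first a (@lcount_zero_insertion n) sz).
rewrite big1 ?add0n /=; last by move=> x qx; rewrite dvdn_add.
have [sp0|sp_ne] := eqVneq (nonzero_part s) [::]; last by rewrite mul1n mulnC.
have -> : zero_count s = n.+1 by rewrite -sz -zero_count_nonzero_part sp0 addn0.
by rewrite ffact_small // mul0n muln0.
Qed.

Lemma lcount_perm (a : nat) (s t : seq nat) : perm_eq s t -> lcount a s = lcount a t.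
Proof. by move=> Est; rewrite /lcount (perm_size Est) (labelled_perm _ _ _ Est). Qed.

End ZeroInsertion.

Lemma mem_leq_sumn (x : nat) (s : seq nat) : x \in s -> x <= sumn s.
Proof.
elim: s => //= y s IH; rewrite inE => /orP[/eqP->|/IH le_xs]; first exact: leq_addr.
exact: leq_trans le_xs (leq_addl _ _).
Qed.

Section PartitionCount.
Variable q : nat.
Hypothesis q_gt0 : 0 < q.

Definition residues (l : seq nat) : seq nat := map (modn^~ q) l.

Lemma count_mu_of (l : seq nat) (v : nat) :
  count_mem v (mu_of q (rvec q l)) = (0 < v < q) * rj q l v.
Proof.
rewrite /mu_of count_flatten sumnE !big_map big_rev.
rewrite (eq_big_seq (fun i => (i == v) * rj q l v)); last first.
  move=> i; rewrite mem_iota => /andP[i1 iq].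
  case: i i1 iq => // k _; rewrite add1n ltnS => kq.
  rewrite count_nseq /rvec /= (nth_map 0) ?size_iota // nth_iota // add1n.
  by case: eqP => [->|].
rewrite -big_distrl /= -big_mkcond.
rewrite (eq_bigr (fun=> 1)) // sum1_count count_uniq_mem ?iota_uniq // mem_iota.
by case: q => [|q'] /=; [case: v | rewrite add1n].
Qed.

Lemma nonzero_residues_perm (l : seq nat) :
  perm_eq (nonzero_part q (residues l)) (mu_of q (rvec q l)).
Proof.
apply/allP => v _; rewrite /= count_mu_of /nonzero_part count_filter count_map /rj.
have [/andP[v_gt0 v_ltq]|v_out] := boolP (0 < v < q).
  rewrite mul1n; apply/eqP/eq_count => x /=.
  by case: eqP => [->|] //=; rewrite gtnNdvd.
rewrite mul0n -leqn0 leqNgt -has_count; apply/hasPn => x _ /=.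
apply/negP => /andP[/eqP xv nd]; move: v_out; apply/negP/negPn.
by rewrite -xv ltn_pmod // andbT lt0n; apply: contraNneq nd => ->; rewrite dvdn0.
Qed.

Lemma zero_count_residues (l : seq nat) : zero_count q (residues l) = rj q l 0.
Proof. by rewrite /zero_count /rj count_map; apply: eq_count => x /=; rewrite /dvdn modn_mod. Qed.

Lemma rj0_size_mu_of (l : seq nat) : rj q l 0 + size (mu_of q (rvec q l)) = size l.
Proof.
by rewrite -zero_count_residues -(perm_size (nonzero_residues_perm l))
  zero_count_nonzero_part size_map.
Qed.

Lemma count_qcumulative (s : seq nat) :
  count (qcumulative q) (permutations s) = (s != [::]) * arrangements q 0 s.
Proof.
case: s => [|y s] //; rewrite mul1n /arrangements; apply: eq_in_count => t.
rewrite mem_permutations => /perm_size; rewrite /qcumulative.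
by case: t => // z t _; rewrite /offset_free.
Qed.

Lemma cq_labelled (l : seq nat) : is_composition l -> l != [::] ->
  cq q l * \prod_(1 <= s < (sumn l).+1) (nmult l s)`! = lcount q 0 (residues l).
Proof.
move=> l_pos l_ne; rewrite /cq /rearrangements count_qcumulative l_ne mul1n.
have -> : \prod_(1 <= s < (sumn l).+1) (nmult l s)`! = labellings (sumn l).+1 l.
  rewrite /labellings [RHS]big_ltn // (count_memPn _) ?mul1n //.
  by apply/negP => /(allP l_pos).
rewrite (@arrangements_labelled q (sumn l).+1 (size l)) //; last by apply/allP => x /mem_leq_sumn.
by rewrite -labelled_residues /lcount size_map.
Qed.

Lemma Wq_labelled (l : seq nat) :
  size (Wq q (rvec q l)) * \prod_(1 <= i < q) (rj q l i)`! =
  (mu_of q (rvec q l) != [::]) * lcount q 0 (mu_of q (rvec q l)).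
Proof.
set mu := mu_of q (rvec q l).
have -> : \prod_(1 <= i < q) (rj q l i)`! = labellings q mu.
  rewrite /labellings [RHS]big_ltn // count_mu_of mul1n.
  by apply: eq_big_nat => i /andP[i_gt0 i_ltq]; rewrite count_mu_of i_gt0 i_ltq mul1n.
rewrite /Wq size_filter count_qcumulative -/mu -mulnA.
rewrite (@arrangements_labelled q q (size mu)) //.
apply/allP => x; rewrite -(perm_mem (nonzero_residues_perm l)) mem_filter.
by case/andP=> _ /mapP[y _ ->]; rewrite ltn_pmod.
Qed.

Lemma cq_identity (l : seq nat) : is_composition l ->
  cq q l * \prod_(1 <= s < (sumn l).+1) (nmult l s)`! =
  size (Wq q (rvec q l)) * \prod_(0 <= i < q) (rj q l i)`! * 'C((size l).-1, rj q l 0).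
Proof.
move=> l_pos; have size_l := rj0_size_mu_of l.
have [l0|l_ne] := eqVneq l [::].
  move: size_l; rewrite l0 => /eqP; rewrite addn_eq0 size_eq0 => /andP[_ /eqP mu0].
  by rewrite /Wq mu0.
set mu := mu_of q (rvec q l) in size_l *.
rewrite (cq_labelled l_pos l_ne) big_ltn // mulnCA -mulnA Wq_labelled -/mu.
rewrite lcount_zero_insertion_head ?size_map ?lt0n ?size_eq0 //.
rewrite zero_count_residues (lcount_perm _ _ (nonzero_residues_perm l)) -/mu.
have [mu0|mu_ne] := eqVneq mu [::].
  have r0_size : rj q l 0 = size l by rewrite -size_l mu0 addn0.
  by rewrite mu0 r0_size ffact_small ?ltn_predL ?lt0n ?size_eq0 // muln0 mul0n muln0.
by rewrite -bin_ffact mul1n; ring.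
Qed.

Lemma rj0_le_size_pred (l : seq nat) : Wq q (rvec q l) != [::] -> rj q l 0 <= (size l).-1.
Proof.
move=> W_ne; have size_l := rj0_size_mu_of l.
have : 0 < size (mu_of q (rvec q l)).
  by move: W_ne; rewrite /Wq; case: (mu_of q (rvec q l)).
by lia.
Qed.

End PartitionCount.

Theorem proposition1 (q : nat) (l : seq nat) :
  0 < q -> is_partition l ->
  ((cq q l)%:R : rat) =
    ((size (Wq q (rvec q l)))%:R
    * (\prod_(0 <= i < q) (rj q l i)`!)%:R
    / (\prod_(1 <= s < (sumn l).+1) (nmult l s)`!)%:R
    * ('C((size l).-1, rj q l 0))%:R)%R
  /\ (cq q l != 0 <-> Wq q (rvec q l) != [::]).
Proof.
move=> q_gt0 /andP[l_pos _]; have identity := cq_identity q_gt0 l_pos.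
set D := \prod_(1 <= s < (sumn l).+1) (nmult l s)`! in identity *.
set P := \prod_(0 <= i < q) (rj q l i)`! in identity *.
have D_ne0 : D != 0 by rewrite -lt0n prodn_gt0 // => s; exact: fact_gt0.
have P_ne0 : P != 0 by rewrite -lt0n prodn_gt0 // => i; exact: fact_gt0.
split.
  have D_ne0_rat : (D%:R : rat) != 0%R by rewrite pnatr_eq0.
  apply: (mulIf D_ne0_rat); rewrite -[LHS]natrM identity !natrM.
  by rewrite [in RHS]mulrAC divfK.
have : (cq q l * D != 0) = (size (Wq q (rvec q l)) * P * 'C((size l).-1, rj q l 0) != 0).
  by rewrite identity.
rewrite !muln_eq0 (negbTE D_ne0) (negbTE P_ne0) orbF size_eq0 => ->.
have [W0|W_ne] := eqVneq (Wq q (rvec q l)) [::]; first by [].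
by rewrite /= -lt0n bin_gt0 rj0_le_size_pred.
Qed.
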